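(* There exist absolute constants $0<c\le C$ such that the following holds. Let $d\ge 1$, $n\ge3$, $m\ge1$ be integers and $0<r\le 1/(2d)$, let $\mathcal{L}$ be the FTCS operator with parameter $r$, and let $A$ be the $mn^d\times mn^d$ block matrix consisting of $m\times m$ blocks of size $n^d\times n^d$, with identity blocks $I$ on the block diagonal, blocks $-\mathcal{L}$ on the block sub-diagonal, and zero blocks elsewhere. Then $c\le\|A\|\le C$ and $c\,m\le\|A^{-1}\|\le C\,m$. In particular the condition number $\|A\|\|A^{-1}\|$ of $A$ is $\Theta(m)$.
   Context: The FTCS operator with parameter $r$ on $\mathbb{R}^{\mathbb{Z}_n^d}$ is $\mathcal{L}=I_n^{\otimes d}+r\sum_{j=1}^d I_n^{\otimes(j-1)}\otimes H\otimes I_n^{\otimes(d-j)}$, where $H$ is the $n\times n$ circulant matrix with $-2$ on the diagonal, $1$ on the super- and sub-diagonal, and $1$ in the corner entries $(1,n)$ and $(n,1)$; equivalently $(\mathcal{L}v)(\mathbf{k})=(1-2dr)v(\mathbf{k})+r\sum_{i=1}^d(v(\mathbf{k}+\mathbf{e}_i)+v(\mathbf{k}-\mathbf{e}_i))$ with indices mod $n$. $\|\cdot\|$ denotes the operator (spectral) norm. *)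

From HB Require Import structures.
From mathcomp Require Import all_boot all_order all_algebra.
From mathcomp Require Import boolp classical_sets reals.
Set Implicit Arguments. Unset Strict Implicit. Unset Printing Implicit Defensive.
Import Order.TTheory GRing.Theory Num.Theory.
Local Open Scope ring_scope.

Section FTCS.
Variable R : realType.

(* The grid Z_n^d, as functions 'I_d -> 'I_n (cyclic indices). *)
Definition grid (d n : nat) := {ffun 'I_d -> 'I_n}.

Definition shiftP d n (k : grid d n) (i : 'I_d) : grid d n :=
  [ffun j => if j == i then ordS (k j) else k j].
Definition shiftM d n (k : grid d n) (i : 'I_d) : grid d n :=
  [ffun j => if j == i then ord_pred (k j) else k j].

(* Entry (k,l) of the FTCS operator L:
   (L v)(k) = (1-2dr) v(k) + r sum_i (v(k+e_i) + v(k-e_i)). *)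
Definition ftcs_entry d n (r : R) (k l : grid d n) : R :=
  (1 - 2 * d%:R * r) * (k == l)%:R
  + r * \sum_(i < d) ((l == shiftP k i)%:R + (l == shiftM k i)%:R).

Definition bidx d n m := ('I_m * grid d n)%type.

Definition bsize d n m := #|{: bidx d n m}|.

(* Rows/columns are
   enumerated via enum_val (a permutation of coordinates, which does not
   affect operator norms). *)
Definition bval d n m (p : 'I_(bsize d n m)) : bidx d n m :=
  @enum_val (bidx d n m) (mem predT) p.

Definition ftcs_block d n m (r : R) : 'M[R]_(bsize d n m) :=
  \matrix_(p, q)
    let: (i, k) := bval p in
    let: (j, l) := bval q in
    ((i == j) && (k == l))%:R - (nat_of_ord i == (nat_of_ord j).+1)%:R * ftcs_entry r k l.

Definition vnorm N (x : 'cV[R]_N) : R := Num.sqrt (\sum_i x i 0 ^+ 2).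

Definition opnorm N M (A : 'M[R]_(N, M)) : R :=
  sup [set vnorm (A *m x) | x in [set x : 'cV[R]_M | vnorm x = 1]]%classic.

End FTCS.

From HB Require Import structures.
From mathcomp Require Import all_boot all_order all_algebra.
From mathcomp Require Import boolp classical_sets reals Rstruct.
From mathcomp Require Import ring lra.
Set Implicit Arguments. Unset Strict Implicit. Unset Printing Implicit Defensive.
Import Order.TTheory GRing.Theory Num.Theory.
Local Open Scope ring_scope.

(* The FTCS operator L is a doubly stochastic matrix (nonnegative entries,
   all row and column sums equal to 1, as soon as 2dr <= 1), hence an
   l2-contraction by Jensen's inequality, and it fixes constants.  The
   theorem is then an instance of a statement about an arbitrary such
   kernel P on a finite set G: the block matrix A with identity blocks on
   the diagonal and -P on the sub-diagonal satisfies
     1 <= ||A|| <= 2   and   m/2 <= ||A^-1|| <= m.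
   The upper bounds come from (Ax)_i = x_i - P x_(i-1) and from the
   recursion y_i = x_i + P y_(i-1) for y = A^-1 x; the lower bounds are
   witnessed by the indicator of the last block (fixed by A) and by the
   constant vector 1, whose preimage is the ramp y_i = i + 1. *)

Definition sqnorm {R : realType} {k : nat} (x : 'cV[R]_k) : R := \sum_i x i 0 ^+ 2.

Section SquaredNorm.
Variable R : realType.

Lemma vnormE k (x : 'cV[R]_k) : vnorm x = Num.sqrt (sqnorm x).
Proof. by []. Qed.

Lemma sqnorm_ge0 k (x : 'cV[R]_k) : 0 <= sqnorm x.
Proof. by apply: sumr_ge0 => i _; rewrite sqr_ge0. Qed.

Lemma sqnormZ k a (x : 'cV[R]_k) : sqnorm (a *: x) = a ^+ 2 * sqnorm x.
Proof. by rewrite /sqnorm mulr_sumr; apply: eq_bigr => i _; rewrite mxE exprMn. Qed.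

Lemma sqnorm_eq0 k (x : 'cV[R]_k) : sqnorm x = 0 -> x = 0.
Proof.
move=> /psumr_eq0P x0; apply/matrixP => i j; rewrite (ord1 j) mxE.
by apply/eqP; rewrite -sqrf_eq0; apply/eqP/x0 => // l _; rewrite sqr_ge0.
Qed.

Lemma normalize_unit k (x : 'cV[R]_k) : 0 < sqnorm x ->
  vnorm ((Num.sqrt (sqnorm x))^-1 *: x) = 1.
Proof.
move=> x_gt0; rewrite vnormE sqnormZ exprVn sqr_sqrtr ?ltW //.
by rewrite mulVf ?sqrtr1 // gt_eqF.
Qed.

End SquaredNorm.

Section OperatorNorm.
Variables (R : realType) (N M : nat) (A : 'M[R]_(N, M)).

Let unit_image := [set vnorm (A *m x) | x in [set x : 'cV[R]_M | vnorm x = 1]]%classic.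

Lemma opnorm_ubound K : 0 <= K ->
  (forall x, sqnorm (A *m x) <= K ^+ 2 * sqnorm x) -> ubound unit_image K.
Proof.
move=> K0 hA _ [x /= x1 <-].
have sx : sqnorm x = 1 by rewrite -(sqr_sqrtr (sqnorm_ge0 x)) -vnormE x1 expr1n.
rewrite vnormE -(ger0_norm K0) -sqrtr_sqr ler_sqrt ?sqr_ge0 //.
by have := hA x; rewrite sx mulr1.
Qed.

Lemma opnorm_le K : 0 <= K ->
  (forall x, sqnorm (A *m x) <= K ^+ 2 * sqnorm x) -> opnorm A <= K.
Proof.
move=> K0 hA; have ub := opnorm_ubound K0 hA.
have [S0|/set0P ne] := eqVneq unit_image set0.
  by rewrite /opnorm -/unit_image S0 sup0.
exact: ge_sup.
Qed.

(* The bound K is only needed to know that the supremum is finite. *)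
Lemma opnorm_ge K c x0 : 0 <= K ->
  (forall x, sqnorm (A *m x) <= K ^+ 2 * sqnorm x) ->
  0 <= c -> 0 < sqnorm x0 -> c ^+ 2 * sqnorm x0 <= sqnorm (A *m x0) ->
  c <= opnorm A.
Proof.
move=> K0 hA c0 x0_gt0 hx0.
set a := (Num.sqrt (sqnorm x0))^-1.
have ub : has_ubound unit_image by exists K; exact: opnorm_ubound.
have in_image : unit_image (vnorm (A *m (a *: x0))).
  by exists (a *: x0) => //; exact: normalize_unit.
apply: le_trans (ub_le_sup ub in_image).
have a2 : a ^+ 2 * sqnorm x0 = 1.
  by rewrite -sqnormZ -(sqr_sqrtr (sqnorm_ge0 _)) -vnormE normalize_unit ?expr1n.
rewrite vnormE -scalemxAr sqnormZ -(ger0_norm c0) -sqrtr_sqr.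
rewrite ler_sqrt; last by rewrite mulr_ge0 ?sqr_ge0 ?sqnorm_ge0.
by have := ler_wpM2l (sqr_ge0 a) hx0; rewrite mulrCA a2 mulr1.
Qed.

End OperatorNorm.

Definition l2sq {R : realType} {T : finType} (v : T -> R) : R := \sum_t v t ^+ 2.

Definition kapply {R : realType} {G : finType} (P : G -> G -> R) (v : G -> R) (k : G) : R :=
  \sum_l P k l * v l.

Section Kernels.
Variable R : realType.

Lemma l2sq_gt0 (T : finType) (v : T -> R) t0 : v t0 != 0 -> 0 < l2sq v.
Proof.
move=> vt0; rewrite /l2sq (bigD1 t0) //= ltr_pwDl ?sumr_ge0 //.
  by rewrite lt_def sqr_ge0 sqrf_eq0 vt0.
by move=> t _; rewrite sqr_ge0.
Qed.

(* Jensen's inequality for the square, with weights of total mass <= 1: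
   it is the nonnegativity of the weighted variance. *)
Lemma weighted_sq_le (I : finType) (w v : I -> R) :
  (forall i, 0 <= w i) -> \sum_i w i <= 1 ->
  (\sum_i w i * v i) ^+ 2 <= \sum_i w i * v i ^+ 2.
Proof.
move=> w0 w1; set a := \sum_i w i * v i; set s := \sum_i w i.
have var_ge0 : 0 <= \sum_i w i * (v i - a) ^+ 2.
  by apply: sumr_ge0 => i _; rewrite mulr_ge0 ?sqr_ge0.
have var_eq : \sum_i w i * (v i - a) ^+ 2
   = \sum_i w i * v i ^+ 2 - 2 * a * a + a ^+ 2 * s.
  transitivity (\sum_i (w i * v i ^+ 2 - (2 * a) * (w i * v i) + a ^+ 2 * w i)).
    by apply: eq_bigr => i _; ring.
  by rewrite big_split /= sumrB -!mulr_sumr.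
have mass_le : a ^+ 2 * s <= a ^+ 2 by rewrite ler_piMr ?sqr_ge0.
move: var_ge0; rewrite var_eq -mulrA -expr2; lra.
Qed.

Variables (G : finType) (P : G -> G -> R).

(* A nonnegative kernel with row and column sums at most 1 is an
   l2-contraction: Jensen in each row, then sum the columns. *)
Lemma kapply_contraction :
  (forall k l, 0 <= P k l) -> (forall k, \sum_l P k l <= 1) ->
  (forall l, \sum_k P k l <= 1) ->
  forall v, l2sq (kapply P v) <= l2sq v.
Proof.
move=> P0 rows cols v.
apply: (@le_trans _ _ (\sum_k \sum_l P k l * v l ^+ 2)).
  by apply: ler_sum => k _; apply: weighted_sq_le.
rewrite exchange_big /=; apply: ler_sum => l _.
by rewrite -mulr_suml ler_piMl ?sqr_ge0.
Qed.

Lemma kapply_const : (forall k, \sum_l P k l = 1) ->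
  forall c k, kapply P (fun=> c) k = c.
Proof. by move=> rows c k; rewrite /kapply -mulr_suml rows mul1r. Qed.

End Kernels.

Definition block_bidiag {R : realType} (G : finType) (m : nat) (P : G -> G -> R) :
    'M[R]_#|{: 'I_m * G}| :=
  \matrix_(p, q)
    let: (i, k) := @enum_val ('I_m * G)%type (mem predT) p in
    let: (j, l) := @enum_val ('I_m * G)%type (mem predT) q in
    ((i == j) && (k == l))%:R - (nat_of_ord i == (nat_of_ord j).+1)%:R * P k l.

Lemma sq_split_le (R : realType) (p x b : R) :
  p * (x + b) ^+ 2 <= (p + 1) * b ^+ 2 + p * (p + 1) * x ^+ 2.
Proof.
rewrite -subr_ge0.
have -> : (p + 1) * b ^+ 2 + p * (p + 1) * x ^+ 2 - p * (x + b) ^+ 2 = (b - p * x) ^+ 2.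
  by ring.
exact: sqr_ge0.
Qed.

Lemma cube_le_sum_squares (R : realType) M :
  M%:R ^+ 3 <= 4 * \sum_(i < M) i.+1%:R ^+ 2 :> R.
Proof.
elim: M => [|M IH]; first by rewrite big_ord0 expr0n mulr0.
rewrite big_ord_recr /= -addn1 natrD.
have M0 : 0 <= M%:R :> R by rewrite ler0n.
suff : (M%:R + 1) ^+ 3 <= M%:R ^+ 3 + 4 * (M%:R + 1) ^+ 2 :> R by lra.
rewrite -subr_ge0.
have -> : M%:R ^+ 3 + 4 * (M%:R + 1) ^+ 2 - (M%:R + 1) ^+ 3 = M%:R ^+ 2 + 5 * M%:R + 3 :> R.
  by ring.
by rewrite !addr_ge0 ?sqr_ge0 ?mulr_ge0.
Qed.

Section BlockBidiagonal.
Variables (R : realType) (G : finType) (m' : nat) (P : G -> G -> R).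
Local Notation m := m'.+1.
Local Notation T := ('I_m * G)%type.
Local Notation N := #|{: T}|.
Local Notation A := (block_bidiag m P).

Definition coord (x : 'cV[R]_N) (t : T) : R := x (enum_rank t) 0.

Definition vec_of (F : T -> R) : 'cV[R]_N := \col_p F (enum_val p).

Lemma coord_vec F t : coord (vec_of F) t = F t.
Proof. by rewrite /coord mxE enum_rankK. Qed.

Lemma coord_inj (x y : 'cV[R]_N) : coord x =1 coord y -> x = y.
Proof.
move=> exy; apply/matrixP => p j; rewrite (ord1 j).
by have := exy (enum_val p); rewrite /coord enum_valK.
Qed.

Lemma sum_enum (F : T -> R) : \sum_(p < N) F (enum_val p) = \sum_t F t.
Proof. by rewrite -big_enum_val. Qed.

Lemma sqnorm_coord (x : 'cV[R]_N) : sqnorm x = l2sq (coord x).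
Proof. by rewrite /l2sq -sum_enum; apply: eq_bigr => p _; rewrite /coord enum_valK. Qed.

Lemma sqnorm_vec_of F : sqnorm (vec_of F) = l2sq F.
Proof. by rewrite sqnorm_coord; apply: eq_bigr => t _; rewrite coord_vec. Qed.

Lemma l2sq_ext (F1 F2 : T -> R) : F1 =1 F2 -> l2sq F1 = l2sq F2.
Proof. by move=> eF; apply: eq_bigr => t _; rewrite eF. Qed.

Definition bentry (s t : T) : R :=
  let: (i, k) := s in let: (j, l) := t in
  ((i == j) && (k == l))%:R - (nat_of_ord i == (nat_of_ord j).+1)%:R * P k l.

Definition bop (X : T -> R) (s : T) : R := \sum_t bentry s t * X t.

Lemma coord_mul (x : 'cV[R]_N) t : coord (A *m x) t = bop (coord x) t.
Proof.
rewrite /coord mxE /bop -sum_enum; apply: eq_bigr => q _.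
by rewrite mxE enum_rankK enum_valK.
Qed.

Lemma mul_vec_of F : A *m vec_of F = vec_of (bop F).
Proof.
apply: coord_inj => t; rewrite coord_mul coord_vec.
by apply: eq_bigr => s _; rewrite coord_vec.
Qed.

Definition sub_diag (X : T -> R) (t : T) : R :=
  if nat_of_ord t.1 is i.+1 then kapply P (fun l => X (inord i, l)) t.2 else 0.

Lemma sum_prev_block (i : 'I_m) (g : 'I_m -> R) :
  \sum_(j : 'I_m) (nat_of_ord i == (nat_of_ord j).+1)%:R * g j =
  if nat_of_ord i is i'.+1 then g (inord i') else 0.
Proof.
case: i => [[|i] lt_im] /=; first by rewrite big1 // => j _; rewrite mul0r.
rewrite (bigD1 (inord i)) //= inordK ?(ltnW lt_im) // eqxx mul1r big1 ?addr0 // => j ne_ji.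
rewrite eqSS; case: eqP; rewrite ?mul0r // => eij.
by move: ne_ji; rewrite eij inord_val eqxx.
Qed.

Lemma bopE X t : bop X t = X t - sub_diag X t.
Proof.
case: t => i k; rewrite /bop.
rewrite (eq_bigr (fun t => (t == (i, k))%:R * X t
   - (nat_of_ord i == (nat_of_ord t.1).+1)%:R * (P k t.2 * X t))); last first.
  move=> [j l] _ /=; rewrite mulrBl mulrA; congr (_ - _).
  by rewrite xpair_eqE [j == i]eq_sym [l == k]eq_sym.
rewrite sumrB (bigD1 (i, k)) //= eqxx mul1r big1 ?addr0; last first.
  by move=> t /negbTE ->; rewrite mul0r.
congr (_ - _); rewrite /sub_diag /=.
rewrite -(sum_prev_block i (fun j => kapply P (fun l => X (j, l)) k)).
under [RHS]eq_bigr do rewrite /kapply mulr_sumr.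
by rewrite pair_bigA; apply: eq_bigr => -[j l] _.
Qed.

Definition block_sq (X : T -> R) (i : 'I_m) : R := \sum_k X (i, k) ^+ 2.

Definition head_sq (X : T -> R) (a : nat) : R := \sum_(j < a.+1) block_sq X (inord j).

Lemma block_sq_ge0 X i : 0 <= block_sq X i.
Proof. by apply: sumr_ge0 => k _; rewrite sqr_ge0. Qed.

Lemma l2sq_blocks X : l2sq X = \sum_i block_sq X i.
Proof. by rewrite /l2sq /block_sq pair_bigA; apply: eq_bigr => -[]. Qed.

Lemma head_sq_ge0 X a : 0 <= head_sq X a.
Proof. by apply: sumr_ge0 => j _; apply: block_sq_ge0. Qed.

Lemma head_sq_le X a : (a < m)%N -> head_sq X a <= l2sq X.
Proof.
move=> lt_am; rewrite /head_sq (big_ord_widen _ (fun j => block_sq X (inord j)) lt_am).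
under eq_bigr do rewrite inord_val.
rewrite l2sq_blocks [X in _ <= X](bigID (fun j : 'I_m => (j < a.+1)%N)) /= lerDl.
by apply: sumr_ge0 => i _; apply: block_sq_ge0.
Qed.

Lemma head_sqS X (i : 'I_m) a : nat_of_ord i = a.+1 ->
  head_sq X a.+1 = head_sq X a + block_sq X i.
Proof.
move=> ei; rewrite /head_sq big_ord_recr /=; congr (_ + block_sq X _).
by apply: val_inj; rewrite /= inordK // -ei.
Qed.

Hypothesis P_contr : forall v : G -> R, l2sq (kapply P v) <= l2sq v.

Lemma sub_diag_l2sq X : l2sq (sub_diag X) <= l2sq X.
Proof.
rewrite !l2sq_blocks big_ord_recl [X in _ <= X]big_ord_recr /=.
have -> : block_sq (sub_diag X) ord0 = 0.
  by rewrite /block_sq big1 // => k _; rewrite expr2 mul0r.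
rewrite add0r ler_wpDr ?block_sq_ge0 //; apply: ler_sum => i _.
have -> : widen_ord (leqnSn m') i = inord i.
  by apply: val_inj; rewrite /= inordK // ltnS ltnW.
exact: P_contr.
Qed.

(* |AX|^2 <= 2|X|^2 + 2|sub_diag X|^2 <= 4|X|^2. *)
Lemma bop_l2sq X : l2sq (bop X) <= 4 * l2sq X.
Proof.
apply: (@le_trans _ _ (\sum_t (2 * X t ^+ 2 + 2 * sub_diag X t ^+ 2))).
  apply: ler_sum => t _; rewrite bopE.
  have := sqr_ge0 (X t + sub_diag X t); lra.
rewrite big_split /= -!mulr_sumr -/(l2sq X) -/(l2sq (sub_diag X)).
have := sub_diag_l2sq X; lra.
Qed.

(* Writing X = AY, we have Y_i = X_i + P Y_(i-1); by induction on i,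
   |Y_i|^2 <= (i+1) (|X_0|^2 + ... + |X_i|^2). *)
Lemma block_growth Y (i : 'I_m) :
  block_sq Y i <= (nat_of_ord i).+1%:R * head_sq (bop Y) i.
Proof.
set X := bop Y.
have YE t : Y t = X t + sub_diag Y t by rewrite /X bopE subrK.
have [a ei] : exists a, nat_of_ord i = a by exists i.
rewrite ei; elim: a i ei => [|a IH] i ei.
  rewrite mulr1n mul1r /head_sq big_ord1 /block_sq.
  have -> : (inord 0 : 'I_m) = i by apply: val_inj; rewrite /= inordK.
  rewrite (eq_bigr (fun k => X (i, k) ^+ 2)) ?lexx // => k _.
  by rewrite YE /sub_diag /= ei addr0.
have lt_am : (a < m)%N by rewrite -ltnS -ei ltnS ltnW.
set j : 'I_m := inord a; set p : R := a.+1%:R.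
have ej : nat_of_ord j = a by rewrite /j inordK.
have p_gt0 : 0 < p by rewrite ltr0n.
have pS : a.+2%:R = p + 1 by rewrite -addn1 natrD.
have step : p * block_sq Y i
    <= (p + 1) * l2sq (kapply P (fun l => Y (j, l))) + p * (p + 1) * block_sq X i.
  rewrite /block_sq /l2sq !mulr_sumr -big_split /=; apply: ler_sum => k _.
  by rewrite YE /sub_diag /= ei; apply: sq_split_le.
have prev := le_trans (P_contr (fun l => Y (j, l))) (IH j ej).
rewrite (head_sqS _ ei) pS -(ler_pM2l p_gt0).
have := ler_wpM2l (ltW (addr_gt0 p_gt0 ltr01)) prev; nra.
Qed.

Lemma bop_inverse_l2sq Y : l2sq Y <= m%:R ^+ 2 * l2sq (bop Y).
Proof.
rewrite l2sq_blocks (@le_trans _ _ (\sum_(i : 'I_m) m%:R * l2sq (bop Y))) //.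
  apply: ler_sum => i _; apply: (le_trans (block_growth Y i)).
  by apply: ler_pM; rewrite ?ler0n ?head_sq_ge0 ?ler_nat ?head_sq_le.
by rewrite sumr_const card_ord -mulrnAl -[m%:R *+ m]mulr_natr -expr2.
Qed.

Lemma block_bidiag_sqnorm_le x : sqnorm (A *m x) <= 2 ^+ 2 * sqnorm x.
Proof.
rewrite !sqnorm_coord (l2sq_ext (coord_mul x)).
by have := bop_l2sq (coord x); rewrite expr2; lra.
Qed.

Lemma block_bidiag_sqnorm_ge x : sqnorm x <= m%:R ^+ 2 * sqnorm (A *m x).
Proof. by rewrite !sqnorm_coord (l2sq_ext (coord_mul x)); apply: bop_inverse_l2sq. Qed.

(* The lower bound |x| <= m |Ax| shows that A has trivial kernel. *)
Lemma block_bidiag_unit : A \in unitmx.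
Proof.
rewrite -unitmx_tr -row_free_unit; apply: inj_row_free => v vA0.
have Av0 : A *m v^T = 0 by apply: trmx_inj; rewrite trmx_mul trmxK vA0 trmx0.
apply: trmx_inj; rewrite trmx0; apply: sqnorm_eq0; apply/eqP.
have := block_bidiag_sqnorm_ge v^T; rewrite Av0.
rewrite (_ : sqnorm 0 = 0) ?mulr0; last first.
  by rewrite /sqnorm big1 // => i _; rewrite mxE expr2 mul0r.
by move=> le0; rewrite eq_le le0 sqnorm_ge0.
Qed.

Lemma block_bidiag_inv_sqnorm_le x : sqnorm (invmx A *m x) <= m%:R ^+ 2 * sqnorm x.
Proof.
rewrite {2}(_ : x = A *m (invmx A *m x)) ?block_bidiag_sqnorm_ge //.
by rewrite mulKVmx ?block_bidiag_unit.
Qed.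

Definition last_block (t : T) : R := (t.1 == ord_max)%:R.

Lemma bop_last_block : bop last_block =1 last_block.
Proof.
move=> [i k]; rewrite bopE /sub_diag /=.
case ei: (nat_of_ord i) => [|i']; first by rewrite subr0.
have lt_im : (i' < m')%N by rewrite -ltnS -ei.
suff -> : (fun l => last_block (inord i', l)) = (fun=> 0).
  by rewrite /kapply big1 ?subr0 // => l _; rewrite mulr0.
apply: funext => l; rewrite /last_block /= (_ : _ == _ = false) //.
by apply/negbTE; rewrite -val_eqE /= inordK ?neq_ltn ?lt_im // ltnS ltnW.
Qed.

Lemma block_bidiag_opnorm (g0 : G) : 1 <= opnorm A <= 2.
Proof.
have last_gt0 : 0 < sqnorm (vec_of last_block).
  by rewrite sqnorm_vec_of (l2sq_gt0 (t0 := (ord_max, g0))) // /last_block eqxx oner_eq0.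
have A_last : A *m vec_of last_block = vec_of last_block.
  by rewrite mul_vec_of; apply: coord_inj => t; rewrite !coord_vec bop_last_block.
apply/andP; split; last exact: opnorm_le block_bidiag_sqnorm_le.
apply: (opnorm_ge (K := 2) (x0 := vec_of last_block)) => //.
  exact: block_bidiag_sqnorm_le.
by rewrite A_last expr1n mul1r.
Qed.

(* When P has unit row sums, A maps the ramp (i+1 on block i) to the
   constant vector 1, whose norm is smaller by a factor of order m. *)
Definition ramp (t : T) : R := (nat_of_ord t.1).+1%:R.

Hypothesis P_row1 : forall k, \sum_l P k l = 1.

Lemma bop_ramp : bop ramp =1 (fun=> 1).
Proof.
move=> [i k]; rewrite bopE /sub_diag /ramp /=.
case ei: (nat_of_ord i) => [|i']; first by rewrite subr0.
rewrite kapply_const // inordK; last by rewrite ltnW // -ei.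
by rewrite -addn1 natrD addrC addKr.
Qed.

Lemma l2sq_ramp : (m%:R / 2) ^+ 2 * l2sq (fun _ : T => 1) <= l2sq ramp.
Proof.
rewrite !l2sq_blocks /block_sq /ramp /=.
under eq_bigr do rewrite sumr_const.
under [X in _ <= X]eq_bigr do rewrite sumr_const.
rewrite sumr_const card_ord sumrMnl expr1n -mulrnA natrM.
set s := \sum_(i < m) _; rewrite -[s *+ _]mulr_natr.
have key (a b c : R) : 0 <= b -> a ^+ 3 <= 4 * c -> (a / 2) ^+ 2 * (b * a) <= c * b.
  move=> b0 /(ler_wpM2r b0) hc; rewrite (_ : _ * _ = a ^+ 3 * b / 4); first lra.
  by rewrite expr_div_n; field.
exact: key (ler0n _ _) (cube_le_sum_squares R m).
Qed.

Lemma block_bidiag_inv_opnorm (g0 : G) : m%:R / 2 <= opnorm (invmx A) <= m%:R.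
Proof.
have one_gt0 : 0 < sqnorm (vec_of (fun=> 1)).
  by rewrite sqnorm_vec_of (l2sq_gt0 (t0 := (ord0, g0))) // oner_eq0.
have A_ramp : A *m vec_of ramp = vec_of (fun=> 1).
  by rewrite mul_vec_of; apply: coord_inj => t; rewrite !coord_vec bop_ramp.
have Ainv_one : invmx A *m vec_of (fun=> 1) = vec_of ramp.
  by rewrite -A_ramp mulKmx // block_bidiag_unit.
apply/andP; split; last exact: opnorm_le (ler0n _ _) block_bidiag_inv_sqnorm_le.
apply: (opnorm_ge (K := m%:R) (x0 := vec_of (fun=> 1))) => //.
- exact: block_bidiag_inv_sqnorm_le.
- by rewrite divr_ge0.
- by rewrite Ainv_one !sqnorm_vec_of l2sq_ramp.
Qed.

End BlockBidiagonal.

Lemma ftcs_blockE (R : realType) d n m (r : R) :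
  ftcs_block d n m r = block_bidiag m (ftcs_entry r).
Proof. by []. Qed.

Lemma sum_indicator (R : realType) (T : finType) (s : T) : \sum_t (t == s)%:R = 1 :> R.
Proof. by rewrite (bigD1 s) //= eqxx big1 ?addr0 // => t /negbTE ->. Qed.

Section FtcsStochastic.
Variables (R : realType) (d n : nat) (r : R).
Local Notation L := (@ftcs_entry R d n r).

Lemma shiftMP (k : grid d n) i : shiftM (shiftP k i) i = k.
Proof. by apply/ffunP => j; rewrite !ffunE; case: eqP => // ->; rewrite ordSK. Qed.

Lemma shiftPM (k : grid d n) i : shiftP (shiftM k i) i = k.
Proof. by apply/ffunP => j; rewrite !ffunE; case: eqP => // ->; rewrite ord_predK. Qed.

Lemma eq_shiftP (k l : grid d n) i : (l == shiftP k i) = (k == shiftM l i).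
Proof. by apply/eqP/eqP => [->|->]; rewrite ?shiftMP ?shiftPM. Qed.

Lemma eq_shiftM (k l : grid d n) i : (l == shiftM k i) = (k == shiftP l i).
Proof. by apply/eqP/eqP => [->|->]; rewrite ?shiftMP ?shiftPM. Qed.

(* Every row and every column of L contains the center weight 1 - 2dr once
   and the weight r exactly 2d times. *)
Lemma ftcs_mass : (1 - 2 * d%:R * r) * 1 + r * \sum_(i < d) (1 + 1) = 1.
Proof. by rewrite sumr_const card_ord -mulr_natr; ring. Qed.

Lemma ftcs_row_sum k : \sum_l L k l = 1.
Proof.
rewrite /ftcs_entry big_split /= -!mulr_sumr exchange_big /=.
under eq_bigr do rewrite eq_sym.
under [X in _ + r * X]eq_bigr do rewrite big_split /= !sum_indicator.
by rewrite sum_indicator ftcs_mass.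
Qed.

Lemma ftcs_col_sum l : \sum_k L k l = 1.
Proof.
rewrite /ftcs_entry big_split /= -!mulr_sumr exchange_big /= sum_indicator.
under [X in _ + r * X]eq_bigr => i _.
  rewrite big_split /=.
  under eq_bigr do rewrite eq_shiftP.
  under [X in _ + X]eq_bigr do rewrite eq_shiftM.
  rewrite !sum_indicator.
over.
exact: ftcs_mass.
Qed.

Hypotheses (d_gt0 : (0 < d)%N) (r_gt0 : 0 < r) (r_le : r <= 1 / (2 * d%:R)).

Lemma ftcs_center_ge0 : 0 <= 1 - 2 * d%:R * r.
Proof.
have d0 : 0 < 2 * d%:R :> R by rewrite mulr_gt0 ?ltr0n.
by move: r_le; rewrite ler_pdivlMr // mulrC subr_ge0.
Qed.

Lemma ftcs_entry_ge0 k l : 0 <= L k l.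
Proof.
rewrite /ftcs_entry addr_ge0 ?mulr_ge0 ?ftcs_center_ge0 ?ler0n ?(ltW r_gt0) //.
by apply: sumr_ge0 => i _; rewrite addr_ge0.
Qed.

Lemma ftcs_contraction v : l2sq (kapply L v) <= l2sq v.
Proof.
apply: kapply_contraction; first exact: ftcs_entry_ge0.
  by move=> k; rewrite ftcs_row_sum.
by move=> l; rewrite ftcs_col_sum.
Qed.

End FtcsStochastic.

(* With c = 1/2 and C = 2: the grid is nonempty since n >= 1, and the
   block estimates apply to the doubly stochastic kernel L. *)
Theorem mainTheorem3 :
  exists c C : Rdefinitions.R, 0 < c /\ c <= C /\
    forall (d n m : nat) (r : Rdefinitions.R),
      (1 <= d)%N -> (3 <= n)%N -> (1 <= m)%N ->
      0 < r -> r <= 1 / (2 * d%:R) ->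
      (c <= opnorm (ftcs_block d n m r) <= C) /\
      (c * m%:R <= opnorm (invmx (ftcs_block d n m r)) <= C * m%:R).
Proof.
exists (1 / 2), 2; split; [lra | split; [lra | ]].
move=> d n [//|m'] r d_gt0 n_ge3 _ r_gt0 r_le.
pose g0 : grid d n := [ffun=> Ordinal (leq_trans (isT : (0 < 3)%N) n_ge3)].
have contr := @ftcs_contraction _ d n r d_gt0 r_gt0 r_le.
have /andP[A_ge A_le] := block_bidiag_opnorm m' contr g0.
have /andP[Ainv_ge Ainv_le] := block_bidiag_inv_opnorm m' contr (ftcs_row_sum r) g0.
have m_ge0 : 0 <= m'.+1%:R :> Rdefinitions.R by rewrite ler0n.
rewrite ftcs_blockE; split; apply/andP; split; lra.
Qed.
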